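(* Let $p,q,r$ be pairwise distinct primes with $p<q$ and $p<r$. Let $q',r'\in\{1,\dots,p-1\}$ be the inverses of $q,r$ modulo $p$, and let $M=\max\{q',r'\}$, $m=\min\{q',r'\}$. Then for every integer $k$, $$F_k-F_{k-q}-F_{k-r}+F_{k-q-r}=\begin{cases}0,& a_k<M+m-p,\\ -1,& M+m-p\le a_k<m,\\ 0,& m\le a_k<M,\\ 1,& M\le a_k<M+m,\\ 0,& M+m\le a_k.\end{cases}$$ More generally, let $(t,u,v)$ be any permutation of $(p,q,r)$, let $x_k$ denote $a_k$, $b_k$ or $c_k$ according as $t=p$, $t=q$ or $t=r$, let $u',v'\in\{1,\dots,t-1\}$ be the inverses of $u,v$ modulo $t$, and $M=\max\{u',v'\}$, $m=\min\{u',v'\}$. Then the same formula holds for $F_k-F_{k-u}-F_{k-v}+F_{k-u-v}$ with $a_k$ replaced by $x_k$ and $p$ replaced by $t$.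
   Context: For each integer $k$, let $a_k,b_k,c_k$ be the unique integers with $0\le a_k<p$, $0\le b_k<q$, $0\le c_k<r$ and $k\equiv a_kqr+b_krp+c_kpq \pmod{pqr}$, and define $F_k=\frac{a_k}{p}+\frac{b_k}{q}+\frac{c_k}{r}-\frac{k}{pqr}$. *)

From HB Require Import structures.
From mathcomp Require Import all_boot all_order all_algebra.
Unset Printing Implicit Defensive.
Import Order.TTheory GRing.Theory Num.Theory.
Local Open Scope ring_scope.

Definition rep_ok (p q r : nat) (k : int) (t : 'I_p * 'I_q * 'I_r) : bool :=
  ((k - ((t.1.1 : nat) * (q * r) + (t.1.2 : nat) * (r * p) + (t.2 : nat) * (p * q))%N%:Z)
      %% (p * q * r)%N%:Z == 0)%Z.

(* "the unique" triple (a_k,b_k,c_k): we pick one satisfying the defining property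
   (it is unique for pairwise distinct primes p,q,r). *)
Definition abc (p q r : nat) (k : int) : nat * nat * nat :=
  match [pick t : ('I_p * 'I_q * 'I_r)%type | rep_ok p q r k t] with
  | Some t => ((t.1.1 : nat), (t.1.2 : nat), (t.2 : nat))
  | None => (0%N, 0%N, 0%N)
  end.

Definition a_ (p q r : nat) (k : int) : nat := (abc p q r k).1.1.
Definition b_ (p q r : nat) (k : int) : nat := (abc p q r k).1.2.
Definition c_ (p q r : nat) (k : int) : nat := (abc p q r k).2.

Definition F (p q r : nat) (k : int) : rat :=
  (a_ p q r k)%:R / p%:R + (b_ p q r k)%:R / q%:R + (c_ p q r k)%:R / r%:R
  - k%:~R / (p * q * r)%N%:R.

From HB Require Import structures.
From mathcomp Require Import all_boot all_order all_algebra zify.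
From mathcomp.algebra_tactics Require Import ring.
Import Order.TTheory GRing.Theory Num.Theory.
Local Open Scope ring_scope.

(* For n one of the primes p, q, r and w the product of the other two, the
   n-coordinate x_n(k) of k (one of a_k, b_k, c_k) is the unique residue in
   [0, n) with x_n(k) * w = k (mod n).  Consequently
   - x_n(k - n) = x_n(k), and more generally x_n(k - s) = (x_n(k) - d) mod n
     whenever d * w = s (mod n);
   - F_k is the sum of the three "shares" x_n(k) / n minus the linear term
     k / (pqr).
   In the alternating sum F_k - F_{k-u} - F_{k-v} + F_{k-u-v} the linear terms
   and the u- and v-shares cancel.  As uv * v' = u and uv * u' = v (mod t), the
   t-coordinate of k - u, k - v, k - u - v is x - v', x - u', x - v' - u'
   reduced mod t, where x = x_t(k); so the alternating sum equals an integer
   combination of floors of (x - d) / t, whose value is read off from the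
   position of x relative to u', v', u' + v' - t. *)

Lemma residue_exists (n w : nat) (k : int) : (0 < n)%N -> coprime w n ->
  exists2 a : nat, (a < n)%N & (n%:Z %| a%:Z * w%:Z - k)%Z.
Proof.
move=> n_gt0 cwn; have [u [v Bezout]] := Bezoutz w%:Z n%:Z.
move: Bezout; rewrite (eqP (cwn : coprimez w%:Z n%:Z)) => Bezout.
have n_neq0 : n%:Z != 0 by rewrite eqz_nat -lt0n.
have rem_ge0 := modz_ge0 (k * u) n_neq0.
exists `|((k * u) %% n)%Z|%N.
  by rewrite -ltz_nat gez0_abs // ltz_pmod // ltz_nat.
rewrite gez0_abs //; apply/dvdzP; exists (- ((k * u) %/ n)%Z * w%:Z - k * v).
have := divz_eq (k * u) n%:Z; set Q := ((k * u) %/ n)%Z; set R := ((k * u) %% n)%Z.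
move=> kuE; have -> : R = k * u - Q * n%:Z by rewrite {1}kuE addrC addKr.
apply/eqP; rewrite -subr_eq0; apply/eqP.
transitivity (k * (u * w%:Z + v * n%:Z - 1)); first ring.
by rewrite Bezout subrr mulr0.
Qed.

Lemma residue_shift (n w X X' : nat) (k s d : int) : coprime w n -> (X' < n)%N ->
  (n%:Z %| X%:Z * w%:Z - k)%Z -> (n%:Z %| X'%:Z * w%:Z - (k - s))%Z ->
  (n%:Z %| d * w%:Z - s)%Z -> X'%:Z = ((X%:Z - d) %% n)%Z.
Proof.
move=> cwn X'_lt dX dX' dd.
have : (n%:Z %| (X'%:Z - (X%:Z - d)) * w%:Z)%Z.
  have -> : (X'%:Z - (X%:Z - d)) * w%:Z =
      (X'%:Z * w%:Z - (k - s)) - (X%:Z * w%:Z - k) + (d * w%:Z - s) by ring.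
  by apply: rpredD => //; apply: rpredB.
rewrite Gauss_dvdzl; last by rewrite coprimez_sym.
rewrite -eqz_mod_dvd => /eqP <-; rewrite modz_small //; lia.
Qed.

Lemma inverse_cofactor {t v v' : nat} (u : nat) : (v * v' = 1 %[mod t])%N ->
  (t%:Z %| v'%:Z * (u * v)%N%:Z - u%:Z)%Z.
Proof.
move=> inv; have : ((v * v')%N%:Z == 1%N%:Z %[mod t%:Z])%Z by rewrite !modz_nat inv.
rewrite eqz_mod_dvd => dv.
have -> : v'%:Z * (u * v)%N%:Z - u%:Z = u%:Z * ((v * v')%N%:Z - 1%N%:Z).
  by rewrite !PoszM; ring.
exact: dvdz_mull.
Qed.

Lemma floor_shift {t x : int} (d : int) : 0 <= x < t -> 0 <= d < 2 * t ->
  (d <= x /\ ((x - d) %/ t)%Z = 0) \/ (d - t <= x < d /\ ((x - d) %/ t)%Z = -1)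
  \/ (x < d - t /\ ((x - d) %/ t)%Z = -2).
Proof.
move=> x_range d_range; have t_neq0 : t != 0 by lia.
have := divz_eq (x - d) t; have := modz_ge0 (x - d) t_neq0.
have := @ltz_pmod (x - d) t ltac:(lia).
set Q := ((x - d) %/ t)%Z; set R := ((x - d) %% t)%Z; nia.
Qed.

Lemma jump_values {t u' v' : nat} {x : int} : 0 <= x < t%:Z ->
  (0 < u' < t)%N -> (0 < v' < t)%N ->
  let j := ((x - v'%:Z) %/ t%:Z)%Z + ((x - u'%:Z) %/ t%:Z)%Z
           - ((x - v'%:Z - u'%:Z) %/ t%:Z)%Z in
  let M : int := (maxn u' v')%:Z in
  let m : int := (minn u' v')%:Z in
  [/\ x < M + m - t%:Z -> j = 0, M + m - t%:Z <= x < m -> j = -1,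
      m <= x < M -> j = 0, M <= x < M + m -> j = 1 & M + m <= x -> j = 0].
Proof.
move=> x_range u'_range v'_range j M m.
have := floor_shift (v'%:Z) x_range ltac:(lia).
have := floor_shift (u'%:Z) x_range ltac:(lia).
have := floor_shift (v'%:Z + u'%:Z) x_range ltac:(lia).
rewrite opprD addrA {}/j {}/M {}/m.
set q1 := ((x - v'%:Z) %/ t%:Z)%Z; set q2 := ((x - u'%:Z) %/ t%:Z)%Z.
set q3 := ((x - v'%:Z - u'%:Z) %/ t%:Z)%Z; clearbody q1 q2 q3.
by split=> bounds; lia.
Qed.

Lemma alternating_residues (t : nat) (x d1 d2 : int) : (0 < t)%N ->
  (x%:~R - ((x - d1) %% t)%Z%:~R - ((x - d2) %% t)%Z%:~R + ((x - d1 - d2) %% t)%Z%:~R)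
    / t%:R = (((x - d1) %/ t)%Z + ((x - d2) %/ t)%Z - ((x - d1 - d2) %/ t)%Z)%:~R :> rat.
Proof.
move=> t_gt0; have modE (z : int) : (z %% t)%Z = z - (z %/ t)%Z * t%:Z.
  by rewrite {2}(divz_eq z t) addrC addKr.
rewrite !modE !(intrD, intrB, intrM).
by field; rewrite pnatr_eq0 -lt0n.
Qed.

Lemma prime_coprime_mul {n a b : nat} : prime n -> prime a -> prime b ->
  n != a -> n != b -> coprime (a * b) n.
Proof.
move=> pn pa pb na nb; rewrite coprimeMl.
by rewrite !(coprime_sym _ n) !prime_coprime // !dvdn_prime2 // na nb.
Qed.

Lemma perm3_prod {t u v p q r : nat} : perm_eq [:: t; u; v] [:: p; q; r] ->
  (t * u * v = p * q * r)%N.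
Proof.
move=> tuv; have := perm_big _ tuv : (\prod_(i <- _) i = \prod_(i <- _) i)%N.
by rewrite !big_cons !big_nil !muln1 !mulnA.
Qed.

Definition rep_value (p q r a b c : nat) : nat :=
  (a * (q * r) + b * (r * p) + c * (p * q))%N.

Lemma rep_okE (p q r : nat) (k : int) (t : 'I_p * 'I_q * 'I_r) :
  rep_ok p q r k t = ((p * q * r)%N%:Z %| k - (rep_value p q r t.1.1 t.1.2 t.2)%:Z)%Z.
Proof. exact/eqP/dvdz_mod0P. Qed.

Lemma rep_value_dvd (p q r a b c : nat) : let N := (rep_value p q r a b c)%:Z in
  [/\ (p%:Z %| N - (a * (q * r))%N%:Z)%Z, (q%:Z %| N - (b * (r * p))%N%:Z)%Z
    & (r%:Z %| N - (c * (p * q))%N%:Z)%Z].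
Proof.
rewrite /rep_value !PoszD !PoszM; split; apply/dvdzP.
- by exists (b%:Z * r%:Z + c%:Z * q%:Z); ring.
- by exists (a%:Z * r%:Z + c%:Z * p%:Z); ring.
- by exists (a%:Z * q%:Z + b%:Z * p%:Z); ring.
Qed.

Definition coord (p q r n : nat) (k : int) : nat :=
  if n == p then a_ p q r k else if n == q then b_ p q r k else c_ p q r k.

Definition share (p q r n : nat) (k : int) : rat := (coord p q r n k)%:R / n%:R.

Section Coordinates.

Context {p q r : nat}.
Hypotheses (p_pr : prime p) (q_pr : prime q) (r_pr : prime r).
Hypotheses (p_neq_q : p != q) (q_neq_r : q != r) (p_neq_r : p != r).

(* Chinese remainder theorem: every k is represented by some triple. *)
Lemma rep_exists (k : int) : exists t, rep_ok p q r k t.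
Proof.
have q_neq_p : q != p by rewrite eq_sym.
have r_neq_q : r != q by rewrite eq_sym.
have r_neq_p : r != p by rewrite eq_sym.
have coprime_pq : coprime p q by rewrite prime_coprime // dvdn_prime2.
have [a a_lt da] := residue_exists p (q * r) k (prime_gt0 p_pr)
  (prime_coprime_mul p_pr q_pr r_pr p_neq_q p_neq_r).
have [b b_lt db] := residue_exists q (r * p) k (prime_gt0 q_pr)
  (prime_coprime_mul q_pr r_pr p_pr q_neq_r q_neq_p).
have [c c_lt dc] := residue_exists r (p * q) k (prime_gt0 r_pr)
  (prime_coprime_mul r_pr p_pr q_pr r_neq_p r_neq_q).
exists (Ordinal a_lt, Ordinal b_lt, Ordinal c_lt); rewrite rep_okE /=.
have [dNa dNb dNc] := rep_value_dvd p q r a b c.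
set N := (rep_value p q r a b c)%:Z in dNa dNb dNc *.
have kN (n w x : nat) : (n%:Z %| N - (x * w)%N%:Z)%Z ->
    (n%:Z %| x%:Z * w%:Z - k)%Z -> (n%:Z %| k - N)%Z.
  move=> dN dx; have -> : k - N = - (N - (x * w)%N%:Z) - (x%:Z * w%:Z - k).
    by rewrite PoszM; ring.
  by apply: rpredB => //; rewrite rpredN.
rewrite PoszM Gauss_dvdz; last exact: prime_coprime_mul r_pr p_pr q_pr r_neq_p r_neq_q.
rewrite PoszM Gauss_dvdz; last exact: coprime_pq.
by rewrite (kN _ _ _ dNa) ?(kN _ _ _ dNb) ?(kN _ _ _ dNc).
Qed.

Lemma cofactorE {n w : nat} : n \in [:: p; q; r] -> (w * n = p * q * r)%N ->
  [\/ n = p /\ w = (q * r)%N, n = q /\ w = (r * p)%N | n = r /\ w = (p * q)%N].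
Proof.
have [p_gt0 q_gt0 r_gt0] := And3 (prime_gt0 p_pr) (prime_gt0 q_pr) (prime_gt0 r_pr).
rewrite !inE => /or3P[] /eqP -> w_eq; [apply: Or31 | apply: Or32 | apply: Or33];
  split => //; nia.
Qed.

Lemma cofactor_coprime {n w : nat} : n \in [:: p; q; r] -> (w * n = p * q * r)%N ->
  coprime w n.
Proof.
move=> n_in w_eq; case: (cofactorE n_in w_eq) => -[-> ->]; apply: prime_coprime_mul => //;
  by rewrite eq_sym.
Qed.

Lemma coord_spec {n w : nat} (k : int) : n \in [:: p; q; r] -> (w * n = p * q * r)%N ->
  (coord p q r n k < n)%N /\ (n%:Z %| (coord p q r n k)%:Z * w%:Z - k)%Z.
Proof.
move=> n_in w_eq; have [t0 t0_ok] := rep_exists k.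
rewrite /coord /a_ /b_ /c_ /abc; case: pickP => [[[a b] c] /= | /(_ t0)]; last by rewrite t0_ok.
rewrite rep_okE /= => k_rep; have [dNa dNb dNc] := rep_value_dvd p q r a b c.
set N := (rep_value p q r a b c)%:Z in k_rep dNa dNb dNc.
have coord_dvd (x : nat) : (n%:Z %| N - (x * w)%N%:Z)%Z -> (n%:Z %| x%:Z * w%:Z - k)%Z.
  move=> dN; have -> : x%:Z * w%:Z - k = - (k - N) - (N - (x * w)%N%:Z).
    by rewrite PoszM; ring.
  rewrite rpredB ?rpredN //; apply: dvdz_trans k_rep.
  by rewrite dvdzE /= -w_eq dvdn_mull.
have q_neq_p : q != p by rewrite eq_sym.
have r_neq_q : r != q by rewrite eq_sym.
have r_neq_p : r != p by rewrite eq_sym.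
case: (cofactorE n_in w_eq) => -[n_eq w_eq']; rewrite n_eq w_eq' in coord_dvd *.
- by rewrite eqxx ltn_ord coord_dvd.
- by rewrite (negbTE q_neq_p) eqxx ltn_ord coord_dvd.
- by rewrite (negbTE r_neq_p) (negbTE r_neq_q) ltn_ord coord_dvd.
Qed.

Lemma coord_shift {n w : nat} (k s d : int) : n \in [:: p; q; r] ->
  (w * n = p * q * r)%N -> (n%:Z %| d * w%:Z - s)%Z ->
  (coord p q r n (k - s))%:Z = (((coord p q r n k)%:Z - d) %% n%:Z)%Z.
Proof.
move=> n_in w_eq ds; have [_ dk] := coord_spec k n_in w_eq.
have [lt_n dks] := coord_spec (k - s) n_in w_eq.
exact: residue_shift (cofactor_coprime n_in w_eq) lt_n dk dks ds.
Qed.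

Lemma coord_periodic {n w : nat} (k : int) : n \in [:: p; q; r] ->
  (w * n = p * q * r)%N -> coord p q r n (k - n%:Z) = coord p q r n k.
Proof.
move=> n_in w_eq; apply/eqP; rewrite -eqz_nat (coord_shift k n%:Z 0 n_in w_eq).
  by rewrite subr0 modz_small //; have [] := coord_spec k n_in w_eq; lia.
by rewrite mul0r sub0r rpredN dvdzz.
Qed.

Lemma coord_step {t u v v' : nat} (k : int) : t \in [:: p; q; r] ->
  (u * v * t = p * q * r)%N -> (v * v' = 1 %[mod t])%N ->
  (coord p q r t (k - u%:Z))%:Z = (((coord p q r t k)%:Z - v'%:Z) %% t%:Z)%Z.
Proof.
by move=> t_in w_t v_inv; apply: coord_shift t_in w_t (inverse_cofactor u v_inv).
Qed.

Lemma F_perm (t u v : nat) (k : int) : perm_eq [:: t; u; v] [:: p; q; r] ->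
  F p q r k = share p q r t k + share p q r u k + share p q r v k
              - k%:~R / (p * q * r)%N%:R.
Proof.
move=> tuv; have := perm_big _ tuv : \sum_(n <- _) share p q r n k = \sum_(n <- _) _.
rewrite !big_cons !big_nil !addr0 !addrA => ->.
have q_neq_p : q != p by rewrite eq_sym.
by rewrite /F /share /coord eqxx (negbTE q_neq_p) eqxx (eq_sym r) (negbTE p_neq_r)
  (eq_sym r) (negbTE q_neq_r).
Qed.

Lemma second_difference {t u v u' v' : nat} (k : int) :
  perm_eq [:: t; u; v] [:: p; q; r] ->
  (u * u' = 1 %[mod t])%N -> (v * v' = 1 %[mod t])%N ->
  let x := (coord p q r t k)%:Z in
  F p q r k - F p q r (k - u%:Z) - F p q r (k - v%:Z) + F p q r (k - u%:Z - v%:Z)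
  = (((x - v'%:Z) %/ t%:Z)%Z + ((x - u'%:Z) %/ t%:Z)%Z
     - ((x - v'%:Z - u'%:Z) %/ t%:Z)%Z)%:~R.
Proof.
move=> tuv u_inv v_inv x.
have [t_in u_in v_in] : [/\ t \in [:: p; q; r], u \in [:: p; q; r] & v \in [:: p; q; r]].
  by rewrite -!(perm_mem tuv) !inE !eqxx ?orbT.
have w_v := perm3_prod tuv.
have [w_t w_t' w_u] : [/\ (u * v * t = p * q * r)%N, (v * u * t = p * q * r)%N
    & (t * v * u = p * q * r)%N] by rewrite -w_v; split; ring.
have u_fixed (j : int) : coord p q r u (j - u%:Z) = coord p q r u j.
  exact: coord_periodic u_in w_u.
have v_fixed (j : int) : coord p q r v (j - v%:Z) = coord p q r v j.
  exact: coord_periodic v_in w_v.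
have u_fixed' : coord p q r u (k - u%:Z - v%:Z) = coord p q r u (k - v%:Z).
  by rewrite (addrAC k) u_fixed.
have x1 := coord_step k t_in w_t v_inv.
have x2 := coord_step k t_in w_t' u_inv.
have x3 : (coord p q r t (k - u%:Z - v%:Z))%:Z = ((x - v'%:Z - u'%:Z) %% t%:Z)%Z.
  by rewrite (coord_step _ t_in w_t' u_inv) x1 modzDml.
have [x_lt_t _] := coord_spec k t_in w_t.
rewrite !(F_perm _ _ _ _ tuv) -alternating_residues; last exact: leq_ltn_trans x_lt_t.
rewrite -x1 -x2 -x3 /share u_fixed' !u_fixed !v_fixed !intrB.
ring.
Qed.

End Coordinates.

Theorem lemma3 (p q r : nat) :
  prime p -> prime q -> prime r ->
  p != q -> q != r -> p != r ->
  (p < q)%N -> (p < r)%N ->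
  forall (t u v : nat), perm_eq [:: t; u; v] [:: p; q; r] ->
  forall (u' v' : nat),
    (1 <= u' < t)%N -> (1 <= v' < t)%N ->
    (u * u' = 1 %[mod t])%N -> (v * v' = 1 %[mod t])%N ->
  let M : int := (maxn u' v')%:Z in
  let m : int := (minn u' v')%:Z in
  forall k : int,
  let x : int := (if t == p then a_ p q r k
                  else if t == q then b_ p q r k
                  else c_ p q r k)%:Z in
  let D : rat := F p q r k - F p q r (k - u%:Z) - F p q r (k - v%:Z)
                 + F p q r (k - u%:Z - v%:Z) in
  [/\ x < M + m - t%:Z -> D = 0,
      M + m - t%:Z <= x < m -> D = -1,
      m <= x < M -> D = 0,
      M <= x < M + m -> D = 1
    & M + m <= x -> D = 0].
Proof.
move=> p_pr q_pr r_pr p_neq_q q_neq_r p_neq_r _ _ t u v tuv u' v' u'_range v'_range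
  u_inv v_inv M m k x D.
have t_in : t \in [:: p; q; r] by rewrite -(perm_mem tuv) mem_head.
have w_t : (u * v * t = p * q * r)%N by rewrite -(perm3_prod tuv) mulnC mulnA.
have [x_lt_t _] := coord_spec p_pr q_pr r_pr p_neq_q q_neq_r p_neq_r k t_in w_t.
have x_range : 0 <= x < t%:Z by rewrite ltz_nat x_lt_t.
have [j1 j2 j3 j4 j5] := jump_values x_range u'_range v'_range.
rewrite /D (second_difference p_pr q_pr r_pr p_neq_q q_neq_r p_neq_r k tuv u_inv v_inv).
by split=> [/j1|/j2|/j3|/j4|/j5] ->.
Qed.
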